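(* Let $M\ge1$ be an integer and $P_{\max},\sigma^2,\beta>0$, $b\ge1$, and $c_b=\frac{2^b}{\pi}\sin\frac{\pi}{2^b}$. For $N>0$ and $K\in\{1,\dots,M\}$ define $$R_s^{\mathrm D}(K)=K\log_2\!\left(1+\frac{P_{\max}MN^2\beta c_b^2}{K^3\sigma^2}\right),\qquad R_s^{\mathrm C}=\log_2\!\left(1+\frac{P_{\max}MN^2\beta c_b^2}{\sigma^2}\right).$$ The equation $g(x):=\ln(1+x)-3+\frac{3}{1+x}=0$ has a unique solution $C_{\mathrm{th}}$ in $(0,\infty)$. Moreover, (i) if $N\le\sqrt{\frac{C_{\mathrm{th}}\sigma^2}{P_{\max}M\beta c_b^2}}$, then $R_s^{\mathrm D}(K)\le R_s^{\mathrm C}$ for all $K\in\{1,\dots,M\}$; (ii) if $N\ge M\sqrt{\frac{C_{\mathrm{th}}\sigma^2}{P_{\max}\beta c_b^2}}$, then $R_s^{\mathrm D}(K)\ge R_s^{\mathrm C}$ for all $K\in\{1,\dots,M\}$.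
   Context: Interpretation: $R_s^{\mathrm D}(K)$ and $R_s^{\mathrm C}$ are the maximum sum-rates of an $M$-antenna base station serving $K$ users aided by $N$ IRS elements with $b$-bit phase quantization, under a distributed-IRS deployment (K IRSs of $N/K$ elements each, one per user) and a centralized-IRS deployment (one $N$-element IRS), respectively, with pure line-of-sight homogeneous channels of common two-hop path loss $\beta=(\rho_{g,1}\rho_{r,1})^2$, transmit power $P_{\max}$ and noise power $\sigma^2$. *)

From Stdlib Require Import Reals.
Open Scope R_scope.

Definition log2 (x : R) : R := ln x / ln 2.

Definition c_b (b : nat) : R := (2 ^ b / PI) * sin (PI / 2 ^ b).

Definition RsD (Pmax sigma2 beta : R) (M : nat) (N : R) (b K : nat) : R :=
  INR K * log2 (1 + Pmax * INR M * N ^ 2 * beta * (c_b b) ^ 2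
                    / (INR K ^ 3 * sigma2)).

Definition RsC (Pmax sigma2 beta : R) (M : nat) (N : R) (b : nat) : R :=
  log2 (1 + Pmax * INR M * N ^ 2 * beta * (c_b b) ^ 2 / sigma2).

Definition gth (x : R) : R := ln (1 + x) - 3 + 3 / (1 + x).

(* With x the receive SNR of the centralized deployment, the distributed rate is
   K ln(1 + x/K^3) / ln 2, and t ln(1 + x/t^3) has derivative g(x/t^3) in t.
   Since g' (y) = (y - 2)/(1 + y)^2 and g(0) = 0, g is negative on (0, 2] and
   strictly increasing on [2, oo), so its positive root C is unique and g <= 0 on
   (0, C], g >= 0 on [C, oo).  If x <= C the argument x/t^3 stays below C for
   t >= 1, so the distributed rate decreases in K; if x >= M^3 C it stays above C
   for 1 <= t <= K <= M, so the distributed rate increases in K. *)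
From Coquelicot Require Import Coquelicot.
From Stdlib Require Import Reals Ranalysis5 Lra Lia.
Open Scope R_scope.

Lemma is_derive_pos_lt (f df : R -> R) (a b : R) :
  a < b ->
  (forall x, a <= x <= b -> is_derive f x (df x)) ->
  (forall x, a < x < b -> 0 < df x) ->
  f a < f b.
Proof.
  intros Hab Hder Hpos.
  destruct (MVT_cor2 f df a b Hab) as [c [Hmvt Hc]].
  - intros x Hx; apply is_derive_Reals, Hder, Hx.
  - specialize (Hpos c Hc); nra.
Qed.

Lemma is_derive_nonneg_le (f df : R -> R) (a b : R) :
  a <= b ->
  (forall x, a <= x <= b -> is_derive f x (df x)) ->
  (forall x, a < x < b -> 0 <= df x) ->
  f a <= f b.
Proof.
  intros Hab Hder Hnneg.
  destruct (Req_dec a b) as [<-|Hne]; [lra|].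
  destruct (MVT_cor2 f df a b) as [c [Hmvt Hc]]; [lra| |].
  - intros x Hx; apply is_derive_Reals, Hder, Hx.
  - specialize (Hnneg c Hc); nra.
Qed.

Lemma is_derive_gth y : -1 < y -> is_derive gth y ((y - 2) / (1 + y) ^ 2).
Proof.
  intros Hy; unfold gth; auto_derive.
  - repeat split; lra.
  - field; lra.
Qed.

Lemma gth_0 : gth 0 = 0.
Proof. unfold gth; rewrite Rplus_0_r, ln_1; field. Qed.

Lemma gth_lt0 y : 0 < y <= 2 -> gth y < 0.
Proof.
  intros Hy.
  enough (- gth 0 < - gth y) by (rewrite gth_0 in *; lra).
  apply (is_derive_pos_lt (fun z => - gth z) (fun z => - ((z - 2) / (1 + z) ^ 2)));
    [lra| |].
  - intros x Hx; apply (is_derive_opp gth), is_derive_gth; lra.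
  - intros x Hx.
    enough ((x - 2) / (1 + x) ^ 2 < 0) by lra.
    apply Rdiv_neg_pos; [lra | apply pow_lt; lra].
Qed.

Lemma gth_increasing x y : 2 <= x < y -> gth x < gth y.
Proof.
  intros Hxy.
  apply (is_derive_pos_lt gth (fun z => (z - 2) / (1 + z) ^ 2)); [lra| |].
  - intros z Hz; apply is_derive_gth; lra.
  - intros z Hz; apply Rdiv_lt_0_compat; [lra | apply pow_lt; lra].
Qed.

Lemma gth_root_gt2 C : 0 < C -> gth C = 0 -> 2 < C.
Proof.
  intros HC HgC.
  destruct (Rle_lt_dec C 2) as [Hle|Hgt]; [|exact Hgt].
  assert (gth C < 0) by (apply gth_lt0; lra); lra.
Qed.

Lemma gth_root_unique : exists! C : R, 0 < C /\ gth C = 0.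
Proof.
  assert (He3 : 1 + 3 < exp 3) by (apply exp_ineq1; lra).
  assert (Hpos : 0 < gth (exp 3 - 1)).
  { unfold gth; replace (1 + (exp 3 - 1)) with (exp 3) by ring.
    rewrite ln_exp.
    assert (0 < 3 / exp 3) by (apply Rdiv_lt_0_compat; lra); lra. }
  destruct (IVT_interv gth 2 (exp 3 - 1)) as [C [HC HgC]].
  - intros x Hx.
    apply continuity_pt_filterlim, (ex_derive_continuous gth).
    eexists; apply is_derive_gth; lra.
  - lra.
  - apply gth_lt0; lra.
  - exact Hpos.
  - exists C; split; [split; [lra | exact HgC]|].
    intros C' [HC' HgC'].
    assert (HC2 : 2 < C') by (apply gth_root_gt2; assumption).
    destruct (Rtotal_order C C') as [Hlt|[Heq|Hlt]]; [|exact Heq|].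
    + assert (gth C < gth C') by (apply gth_increasing; lra); lra.
    + assert (gth C' < gth C) by (apply gth_increasing; lra); lra.
Qed.

Lemma gth_le0_below_root C y : gth C = 0 -> 0 < y <= C -> gth y <= 0.
Proof.
  intros HgC Hy.
  destruct (Rle_lt_dec y 2) as [Hle|Hgt]; [left; apply gth_lt0; lra|].
  destruct (Req_dec y C) as [->|Hne]; [lra|].
  assert (gth y < gth C) by (apply gth_increasing; lra); lra.
Qed.

Lemma gth_ge0_above_root C y : 0 < C -> gth C = 0 -> C <= y -> 0 <= gth y.
Proof.
  intros HC HgC Hy.
  assert (HC2 := gth_root_gt2 C HC HgC).
  destruct (Req_dec y C) as [->|Hne]; [lra|].
  assert (gth C < gth y) by (apply gth_increasing; lra); lra.
Qed.

Definition scaled_rate (x t : R) : R := t * ln (1 + x / t ^ 3).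

Lemma scaled_rate_1 x : scaled_rate x 1 = ln (1 + x).
Proof. unfold scaled_rate; rewrite pow1, Rdiv_1_r, Rmult_1_l; reflexivity. Qed.

Lemma is_derive_scaled_rate x t :
  0 < x -> 0 < t -> is_derive (scaled_rate x) t (gth (x / t ^ 3)).
Proof.
  intros Hx Ht.
  assert (Ht3 : 0 < t ^ 3) by (apply pow_lt; lra).
  assert (0 < x / t ^ 3) by (apply Rdiv_lt_0_compat; lra).
  assert (E : x * / (t * (t * (t * 1))) = x / t ^ 3) by (unfold Rdiv; simpl; ring).
  unfold scaled_rate; auto_derive.
  - rewrite E; repeat split; lra.
  - rewrite E; unfold gth; field; lra.
Qed.

Lemma scaled_rate_le_1 C x k :
  gth C = 0 -> 0 < x <= C -> 1 <= k -> scaled_rate x k <= ln (1 + x).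
Proof.
  intros HgC Hx Hk; rewrite <- scaled_rate_1.
  enough (- scaled_rate x 1 <= - scaled_rate x k) by lra.
  apply (is_derive_nonneg_le (fun t => - scaled_rate x t) (fun t => - gth (x / t ^ 3)));
    [exact Hk| |].
  - intros t Ht; apply (is_derive_opp (scaled_rate x)), is_derive_scaled_rate; lra.
  - intros t Ht.
    assert (Ht3 : 1 < t ^ 3) by (apply Rlt_pow_R1; [lra | lia]).
    assert (0 < x / t ^ 3 <= x).
    { split; [apply Rdiv_lt_0_compat; lra|].
      apply Rle_div_l; nra. }
    enough (gth (x / t ^ 3) <= 0) by lra.
    apply (gth_le0_below_root C); [exact HgC | lra].
Qed.

Lemma scaled_rate_ge_1 C x k :
  0 < C -> gth C = 0 -> k ^ 3 * C <= x -> 1 <= k -> ln (1 + x) <= scaled_rate x k.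
Proof.
  intros HC HgC Hx Hk; rewrite <- scaled_rate_1.
  assert (Hk3 : 1 <= k ^ 3) by (apply pow_R1_Rle; lra).
  apply (is_derive_nonneg_le (scaled_rate x) (fun t => gth (x / t ^ 3))); [exact Hk| |].
  - intros t Ht; apply is_derive_scaled_rate; nra.
  - intros t Ht.
    assert (Ht3 : 0 < t ^ 3) by (apply pow_lt; lra).
    assert (t ^ 3 <= k ^ 3) by (apply pow_incr; lra).
    apply (gth_ge0_above_root C); [exact HC | exact HgC |].
    apply Rle_div_r; nra.
Qed.

Definition snr (Pmax sigma2 beta : R) (M : nat) (N : R) (b : nat) : R :=
  Pmax * INR M * N ^ 2 * beta * (c_b b) ^ 2 / sigma2.

Lemma RsD_scaled_rate Pmax sigma2 beta M N b K :
  RsD Pmax sigma2 beta M N b K = scaled_rate (snr Pmax sigma2 beta M N b) (INR K) / ln 2.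
Proof.
  assert (E : forall a k s, a / (k * s) = a / s / k)
    by (intros; unfold Rdiv; rewrite Rinv_mult; ring).
  unfold RsD, scaled_rate, snr, log2; rewrite E; unfold Rdiv; ring.
Qed.

Lemma RsC_snr Pmax sigma2 beta M N b :
  RsC Pmax sigma2 beta M N b = ln (1 + snr Pmax sigma2 beta M N b) / ln 2.
Proof. reflexivity. Qed.

Lemma c_b_pos b : (1 <= b)%nat -> 0 < c_b b.
Proof.
  intros Hb; unfold c_b.
  assert (H2b : 2 <= 2 ^ b) by (rewrite <- pow_1 at 1; apply Rle_pow; [lra | exact Hb]).
  assert (HPI := PI_RGT_0).
  apply Rmult_lt_0_compat; [apply Rdiv_lt_0_compat; lra|].
  apply sin_gt_0; [apply Rdiv_lt_0_compat; lra|].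
  apply Rlt_div_l; nra.
Qed.

Lemma le_sqrt_pow2 x y : 0 <= x -> 0 <= y -> x <= sqrt y -> x ^ 2 <= y.
Proof.
  intros Hx Hy Hxy; rewrite <- (pow2_sqrt y Hy); apply pow_incr; lra.
Qed.

Section Snr.

Variables (Pmax sigma2 beta : R) (M b : nat).
Hypotheses (Pmax_pos : 0 < Pmax) (sigma2_pos : 0 < sigma2) (beta_pos : 0 < beta).
Hypotheses (M_ge1 : (1 <= M)%nat) (b_ge1 : (1 <= b)%nat).

Let gain := Pmax * beta * c_b b ^ 2.

Lemma gain_pos : 0 < gain.
Proof.
  assert (Hc := c_b_pos b b_ge1).
  unfold gain; apply Rmult_lt_0_compat; [nra | apply pow_lt; lra].
Qed.

Lemma snr_gain N : snr Pmax sigma2 beta M N b = INR M * gain * N ^ 2 / sigma2.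
Proof. unfold snr, gain; field; lra. Qed.

Lemma snr_pos N : 0 < N -> 0 < snr Pmax sigma2 beta M N b.
Proof.
  intros HN; rewrite snr_gain.
  assert (HMr : 1 <= INR M) by (apply (le_INR 1); exact M_ge1).
  assert (0 < N ^ 2) by (apply pow_lt; lra).
  assert (Hg := gain_pos).
  apply Rdiv_lt_0_compat; [|exact sigma2_pos].
  apply Rmult_lt_0_compat; nra.
Qed.

Lemma snr_le_of_le_sqrt C N :
  0 <= C -> 0 <= N ->
  N <= sqrt (C * sigma2 / (Pmax * INR M * beta * c_b b ^ 2)) ->
  snr Pmax sigma2 beta M N b <= C.
Proof.
  intros HC HN HNC.
  assert (HMr : 1 <= INR M) by (apply (le_INR 1); exact M_ge1).
  assert (Hg := gain_pos).
  replace (Pmax * INR M * beta * c_b b ^ 2) with (INR M * gain) in HNC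
    by (unfold gain; ring).
  apply le_sqrt_pow2 in HNC; [|exact HN | apply Rdiv_le_0_compat; nra].
  rewrite snr_gain; apply Rle_div_l; [exact sigma2_pos|].
  apply Rle_div_r in HNC; nra.
Qed.

Lemma snr_ge_of_ge_sqrt C N :
  0 <= C ->
  INR M * sqrt (C * sigma2 / (Pmax * beta * c_b b ^ 2)) <= N ->
  INR M ^ 3 * C <= snr Pmax sigma2 beta M N b.
Proof.
  intros HC HNC.
  assert (HMr : 1 <= INR M) by (apply (le_INR 1); exact M_ge1).
  assert (Hg := gain_pos).
  fold gain in HNC.
  assert (HD : 0 <= C * sigma2 / gain) by (apply Rdiv_le_0_compat; nra).
  assert (HN2 : INR M ^ 2 * (C * sigma2 / gain) <= N ^ 2).
  { rewrite <- (pow2_sqrt _ HD), <- Rpow_mult_distr.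
    apply pow_incr; split; [|exact HNC].
    apply Rmult_le_pos; [lra | apply sqrt_pos]. }
  rewrite snr_gain; apply (proj1 (Rle_div_r _ _ _ sigma2_pos)).
  apply (Rmult_le_compat_l (INR M * gain)) in HN2; [|nra].
  replace (INR M * gain * (INR M ^ 2 * (C * sigma2 / gain))) with
    (INR M ^ 3 * C * sigma2) in HN2 by (field; lra).
  exact HN2.
Qed.

End Snr.

Theorem theorem1 (M : nat) (Pmax sigma2 beta : R) (b : nat) :
  (1 <= M)%nat -> 0 < Pmax -> 0 < sigma2 -> 0 < beta -> (1 <= b)%nat ->
  (exists! C : R, 0 < C /\ gth C = 0) /\
  (forall Cth : R, 0 < Cth -> gth Cth = 0 ->
     (forall N : R, 0 < N ->
        N <= sqrt (Cth * sigma2 / (Pmax * INR M * beta * (c_b b) ^ 2)) ->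
        forall K : nat, (1 <= K <= M)%nat ->
          RsD Pmax sigma2 beta M N b K <= RsC Pmax sigma2 beta M N b) /\
     (forall N : R, 0 < N ->
        INR M * sqrt (Cth * sigma2 / (Pmax * beta * (c_b b) ^ 2)) <= N ->
        forall K : nat, (1 <= K <= M)%nat ->
          RsC Pmax sigma2 beta M N b <= RsD Pmax sigma2 beta M N b K)).
Proof.
  intros HM HP Hs Hbeta Hb; split; [exact gth_root_unique|].
  intros C HC HgC.
  assert (Hln2 : 0 < / ln 2) by (apply Rinv_0_lt_compat; assert (H := ln_lt_2); lra).
  split; intros N HN HNC K HK;
    rewrite RsD_scaled_rate, RsC_snr; apply Rmult_le_compat_r; try lra;
    assert (HK1 : 1 <= INR K) by (apply (le_INR 1); lia);
    assert (Hsnr := snr_pos Pmax sigma2 beta M b HP Hs Hbeta HM Hb N HN).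
  - apply (scaled_rate_le_1 C); [exact HgC | split; [exact Hsnr|] | exact HK1].
    apply (snr_le_of_le_sqrt Pmax sigma2 beta M b HP Hs Hbeta HM Hb); [lra | lra | exact HNC].
  - apply (scaled_rate_ge_1 C); [exact HC | exact HgC | | exact HK1].
    apply Rle_trans with (INR M ^ 3 * C).
    + apply Rmult_le_compat_r; [lra|].
      apply pow_incr; split; [lra | apply le_INR; lia].
    + apply (snr_ge_of_ge_sqrt Pmax sigma2 beta M b HP Hs Hbeta HM Hb); [lra | exact HNC].
Qed.
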